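(* Let $j,k$ be two settings with true effects $\theta^j,\theta^k$, short-regression parameters $\theta^j_s,\theta^k_s$, and omitted variable biases $B^i = \theta^i_s-\theta^i$ satisfying $B^i\in[\nu^i_l,\nu^i_u]$ ($i\in\{j,k\}$, known constants $\nu^i_l\le\nu^i_u$) and $B^j=\rho^{jk}B^k$ with $\rho^{jk}\in[\rho^{jk}_l,\rho^{jk}_u]$, $0<\rho^{jk}_l\le 1\le\rho^{jk}_u$. Let $\mathbb{C}^{jk} = \{(\rho^{jk}_l-1)\nu^k_l, (\rho^{jk}_u-1)\nu^k_l, (\rho^{jk}_l-1)\nu^k_u, (\rho^{jk}_u-1)\nu^k_u\}$, $c^{jk}_l=\min\mathbb{C}^{jk}$, $c^{jk}_u=\max\mathbb{C}^{jk}$, $\mathcal{I}^i = [\theta^i_s-\nu^i_u,\theta^i_s-\nu^i_l]$, $\mathcal{I}^{jk}_D = [(\theta^j_s-\theta^k_s)-c^{jk}_u,(\theta^j_s-\theta^k_s)-c^{jk}_l]$, and $\mathcal{J}^{jk} = \{(\theta^j,\theta^k):\theta^j\in\mathcal{I}^j,\ \theta^k\in\mathcal{I}^k,\ \theta^j-\theta^k\in\mathcal{I}^{jk}_D\}$. Then the projection of $\mathcal{J}^{jk}$ onto the first coordinate is \[ \mathrm{proj}_j(\mathcal{J}^{jk}) = \mathcal{I}^j \cap [\theta^j_s - \nu^k_u - c^{jk}_u,\ \theta^j_s - \nu^k_l - c^{jk}_l]. \] Moreover, $\mathrm{proj}_j(\mathcal{J}^{jk}) \subsetneq \mathcal{I}^j$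 if and only if at least one of the following holds: (1) $\nu^k_u + c^{jk}_u < \nu^j_u$; (2) $\nu^k_l + c^{jk}_l > \nu^j_l$.
   Context: $\mathrm{proj}_j(\mathcal{J}^{jk}) = \{\theta^j : \exists\,\theta^k \text{ with } (\theta^j,\theta^k)\in\mathcal{J}^{jk}\}$. In the setting of the paper, $\theta^i$ is the causal effect in the partially linear model $Y^i=\theta^iD^i+f^i(X^i,A^i)+\varepsilon^i$ with $A^i$ unobserved, and $\theta^i_s$ the parameter from the short regression omitting $A^i$; for the claim only the numerical quantities above matter. *)

From mathcomp Require Import all_boot all_order all_algebra.
From mathcomp Require Import boolp classical_sets.
Set Implicit Arguments. Unset Strict Implicit. Unset Printing Implicit Defensive.
Import Order.TTheory GRing.Theory Num.Theory.
Local Open Scope ring_scope.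
Local Open Scope classical_set_scope.

Section Defs.
Variable R : realFieldType.

Definition cint (a b : R) : set R := [set x | a <= x <= b].

Definition min4 (a b c d : R) : R := Num.min (Num.min a b) (Num.min c d).
Definition max4 (a b c d : R) : R := Num.max (Num.max a b) (Num.max c d).

Definition c_l (rl ru nkl nku : R) : R :=
  min4 ((rl - 1) * nkl) ((ru - 1) * nkl) ((rl - 1) * nku) ((ru - 1) * nku).
Definition c_u (rl ru nkl nku : R) : R :=
  max4 ((rl - 1) * nkl) ((ru - 1) * nkl) ((rl - 1) * nku) ((ru - 1) * nku).

Definition I_set (ths nul nuu : R) : set R := cint (ths - nuu) (ths - nul).

Definition ID_set (thjs thks rl ru nkl nku : R) : set R :=
  cint ((thjs - thks) - c_u rl ru nkl nku) ((thjs - thks) - c_l rl ru nkl nku).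

Definition J_set (thjs thks njl nju nkl nku rl ru : R) : set (R * R) :=
  [set p | I_set thjs njl nju p.1 /\ I_set thks nkl nku p.2 /\
           ID_set thjs thks rl ru nkl nku (p.1 - p.2)].

Definition proj1set (S : set (R * R)) : set R := [set x | exists y, S (x, y)].

End Defs.

(* For fixed x, the constraints on the second coordinate are y in I^k and
   x - y in I_D, so x is feasible iff x lies in the Minkowski sum I^k + I_D,
   an interval whose endpoints simplify to thjs - nku - c_u and
   thjs - nkl - c_l.  Intersecting I^j with an interval removes a point of
   the nonempty I^j exactly when one of the endpoints of I^j falls outside. *)
From mathcomp Require Import all_boot all_order all_algebra.
From mathcomp Require Import boolp classical_sets.
From mathcomp Require Import ring lra.
Import Order.TTheory GRing.Theory Num.Theory.
Local Open Scope ring_scope.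
Local Open Scope classical_set_scope.

Section IdentifiedSet.
Variable R : realFieldType.
Implicit Types a b c d e f : R.

Lemma min4_le_max4 a b c d : min4 a b c d <= max4 a b c d.
Proof. by apply: (@le_trans _ _ a); rewrite ?ge_min ?le_max lexx. Qed.

Lemma cint_sumE c d e f : c <= d -> e <= f ->
  [set x | exists y, cint c d y /\ cint e f (x - y)] = cint (c + e) (d + f).
Proof.
move=> cd ef; apply/seteqP; split => x /=.
  by move=> [y [/andP[cy yd] /andP[exy xyf]]]; apply/andP; split; lra.
move=> /andP[cex xdf]; exists (Num.max c (x - f)).
by case: (leP c (x - f)) => cxf; split; apply/andP; split; lra.
Qed.

Lemma properI_cint a b c d : a <= b ->
  cint a b `&` cint c d `<` cint a b <-> a < c \/ d < b.
Proof.
move=> ab; split.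
  move=> [_ not_sub]; have [ac|ca] := ltP a c; first by left.
  have [db|bd] := ltP d b; first by right.
  by exfalso; apply: not_sub => x /= /andP[ax xb]; split; apply/andP; split; lra.
have a_in : cint a b a by rewrite /cint /= lexx ab.
have b_in : cint a b b by rewrite /cint /= lexx ab.
move=> out; split=> [x [] // | sub].
by case: out => [ac|db]; [case: (sub a a_in) | case: (sub b b_in)] => _ /andP; lra.
Qed.

Lemma cl_le_cu (rl ru nkl nku : R) :
  c_l rl ru nkl nku <= c_u rl ru nkl nku.
Proof. exact: min4_le_max4. Qed.

Lemma proj1set_J_set (thjs thks njl nju nkl nku rl ru : R) :
  nkl <= nku ->
  proj1set (J_set thjs thks njl nju nkl nku rl ru)
    = I_set thjs njl nju `&`
      cint (thjs - nku - c_u rl ru nkl nku) (thjs - nkl - c_l rl ru nkl nku).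
Proof.
move=> hnk; have hc := cl_le_cu rl ru nkl nku.
have feasible_snd : [set x | exists y, I_set thks nkl nku y /\
                       ID_set thjs thks rl ru nkl nku (x - y)]
    = cint (thjs - nku - c_u rl ru nkl nku) (thjs - nkl - c_l rl ru nkl nku).
  rewrite /I_set /ID_set cint_sumE; [|lra|lra].
  by f_equal; ring.
rewrite -feasible_snd; apply/seteqP; split => x /=.
  by move=> [y [Ix [Iy IDxy]]]; split; last exists y.
by move=> [Ix [y [Iy IDxy]]]; exists y.
Qed.

End IdentifiedSet.

Theorem proposition3 (R : realFieldType)
  (thj thk thjs thks njl nju nkl nku rho rl ru : R)
  (hnj : njl <= nju) (hnk : nkl <= nku)
  (hrl : 0 < rl) (hrl1 : rl <= 1) (hru1 : 1 <= ru)
  (hBj : njl <= thjs - thj <= nju) (hBk : nkl <= thks - thk <= nku)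
  (hrho : rl <= rho <= ru) (hBjk : thjs - thj = rho * (thks - thk)) :
  proj1set (J_set thjs thks njl nju nkl nku rl ru)
    = I_set thjs njl nju `&`
      cint (thjs - nku - c_u rl ru nkl nku) (thjs - nkl - c_l rl ru nkl nku)
  /\ (proj1set (J_set thjs thks njl nju nkl nku rl ru) `<` I_set thjs njl nju
      <-> (nku + c_u rl ru nkl nku < nju \/ nkl + c_l rl ru nkl nku > njl)).
Proof.
(* The hypotheses on thj, thk and rho only place the true pair in J; the set
   identities need just the orderings of the bounds. *)
rewrite proj1set_J_set //; split=> //.
rewrite properI_cint; last by rewrite lerB.
lra.
Qed.
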